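(* Let $d\in\{4,5\}$ and let $(h_0,\dots,h_d)\in\mathbb{Z}^{d+1}$ satisfy $h_0=1$ and $h_i=h_{d-i}$ for all $i$; write $h(t)=\sum_{i=0}^dh_it^i=\sum_{i=0}^{2}\gamma_it^i(1+t)^{d-2i}$. If $(\gamma_0,\gamma_1,\gamma_2)$ is an $f$-vector, then $(h_0,\dots,h_d)$ is log-concave. If $(\gamma_0,\gamma_1,\gamma_2)$ is the $f$-vector of a balanced simplicial complex, then $h(t)$ is real-rooted.
   Context: An $f$-vector is the sequence $(f_0,f_1,\dots)$ counting the faces of cardinality $0,1,\dots$ of a simplicial complex. A pure simplicial complex of dimension $k$ is balanced if its vertices can be colored with $k+1$ colors so that no face contains two vertices of the same color; a sequence is the $f$-vector of a balanced complex if it is the $f$-vector of such a complex. A sequence $(h_i)$ is log-concave if $h_i^2\geqslant h_{i-1}h_{i+1}$ for all $0<i<d$. A polynomial is real-rooted if all its roots are real. *)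

From HB Require Import structures.
From mathcomp Require Import all_boot all_order all_algebra all_field.
Set Implicit Arguments. Unset Strict Implicit. Unset Printing Implicit Defensive.
Import Order.TTheory GRing.Theory Num.Theory.
Local Open Scope ring_scope.

Definition is_complex (V : finType) (D : {set {set V}}) : Prop :=
  set0 \in D /\ forall F G : {set V}, F \in D -> G \subset F -> G \in D.

Definition fvec (V : finType) (D : {set {set V}}) (i : nat) : nat :=
  #|[set F in D | #|F| == i]|.

Definition balanced (V : finType) (D : {set {set V}}) (r : nat) : Prop :=
  (forall F, F \in D -> #|F| <= r)%N /\
  (forall F, F \in D -> exists2 G, G \in D & (F \subset G) && (#|G| == r)) /\
  exists c : V -> nat,
    forall F, F \in D -> (forall x, x \in F -> c x < r)%N /\ {in F &, injective c}.

Definition is_fvector (g : nat -> int) (r : nat) : Prop :=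
  exists (n : nat) (D : {set {set 'I_n}}), is_complex D /\
    forall i, (fvec D i)%:Z = (if (i < r)%N then g i else 0).

Definition is_balanced_fvector (g : nat -> int) (r : nat) : Prop :=
  exists (n : nat) (D : {set {set 'I_n}}), is_complex D /\
    (exists k, balanced D k) /\
    forall i, (fvec D i)%:Z = (if (i < r)%N then g i else 0).

Definition hpoly (d : nat) (h : nat -> int) : {poly int} := \poly_(i < d.+1) h i.

Definition log_concave (d : nat) (h : nat -> int) : Prop :=
  forall i, (0 < i < d)%N -> h i.-1 * h i.+1 <= h i ^+ 2.

Definition real_rooted (p : {poly int}) : Prop :=
  forall z : algC, root (map_poly intr p) z -> z \is Num.real.

(* By the gamma expansion, for d = 4 or 5 the h-vector is determined by
   (gamma_1, gamma_2) and h(t) = (1 + t)^(d-4) q(t) with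
   q(t) = (1 + t)^4 + gamma_1 t (1 + t)^2 + gamma_2 t^2.
   Any complex has at most f_1^2 edges, so gamma_2 <= gamma_1^2, and
   log-concavity is then checked entry by entry.  A balanced complex
   without triangles is coloured with at most two colours, so its 1-skeleton
   is bipartite and 4 gamma_2 <= gamma_1^2.  For a root z of q, the number
   s = (1 + z)^2 / z solves s^2 + gamma_1 s + gamma_2 = 0, whose discriminant
   is nonnegative, so s is real and s <= 0; then z solves
   z^2 + (2 - s) z + 1 = 0, whose discriminant s^2 - 4 s is nonnegative. *)

From HB Require Import structures.
From mathcomp Require Import all_boot all_order all_algebra all_field.
From mathcomp Require Import zify ring.
Set Implicit Arguments. Unset Strict Implicit. Unset Printing Implicit Defensive.
Import Order.TTheory GRing.Theory Num.Theory.

Definition vertices (V : finType) (D : {set {set V}}) : {set V} :=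
  [set x | [set x] \in D].

Section EdgeCount.

Variables (V : finType) (D : {set {set V}}).
Hypothesis complexD : is_complex D.

Lemma fvec1_vertices : fvec D 1 = #|vertices D|.
Proof.
rewrite /fvec -(card_imset _ (@set1_inj V)); apply: eq_card => F.
rewrite !inE; apply/andP/imsetP => [[FD /cards1P [x Fx]] | [x + ->]].
  by exists x; rewrite // inE -Fx.
by rewrite inE cards1.
Qed.

Lemma edge_vertices F : F \in D -> #|F| = 2 ->
  exists x y, [/\ x != y, F = [set x; y], x \in vertices D & y \in vertices D].
Proof.
have [_ sub_closed] := complexD; move=> FD /eqP /cards2P [x [y [xy Fxy]]].
by exists x, y; split; rewrite // inE;
  apply: (sub_closed F); rewrite // Fxy sub1set !inE eqxx ?orbT.
Qed.

Lemma fvec2_le_mul (A B : {set V}) :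
  (forall F, F \in D -> #|F| = 2 -> exists2 p, p \in setX A B & F = [set p.1; p.2]) ->
  fvec D 2 <= #|A| * #|B|.
Proof.
move=> edgeAB; rewrite -cardsX /fvec.
apply: leq_trans (leq_imset_card (fun p : V * V => [set p.1; p.2]) _).
apply: subset_leq_card; apply/subsetP => F; rewrite inE => /andP [FD /eqP F2].
by have [p pAB ->] := edgeAB F FD F2; apply: imset_f.
Qed.

Lemma fvec2_le_sqr : fvec D 2 <= fvec D 1 ^ 2.
Proof.
rewrite fvec1_vertices; apply: fvec2_le_mul => F FD F2.
have [x [y [_ -> xV yV]]] := edge_vertices FD F2.
by exists (x, y); rewrite // inE xV yV.
Qed.

Lemma balanced_fvec_neq0 k : balanced D k -> fvec D k != 0.
Proof.
have [D0 _] := complexD; move=> [_ [facet _]]; have [G GD /andP [_ Gk]] := facet _ D0.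
by rewrite /fvec -lt0n card_gt0; apply/set0Pn; exists G; rewrite inE GD.
Qed.

Lemma balanced_fvec2_le k : balanced D k -> k <= 2 ->
  4 * fvec D 2 <= fvec D 1 ^ 2.
Proof.
move=> [_ [_ [c colouring]]] k2.
pose A := [set x in vertices D | c x == 0]; pose B := vertices D :\: A.
have AV : A \subset vertices D by apply/subsetP => x; rewrite inE => /andP [].
have cardV : #|vertices D| = #|A| + #|B|.
  by rewrite -(cardsID A (vertices D)) (setIidPr AV).
have bipartite : fvec D 2 <= #|A| * #|B|.
  apply: fvec2_le_mul => F FD F2.
  have [x [y [xy Fxy xV yV]]] := edge_vertices FD F2.
  rewrite !inE in xV yV.
  have [/(_ _ _) col_lt inj] := colouring F FD.
  have cx : c x < 2 by apply: leq_trans k2; apply: col_lt; rewrite Fxy !inE eqxx.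
  have cy : c y < 2 by apply: leq_trans k2; apply: col_lt; rewrite Fxy !inE eqxx orbT.
  have cxy : c x != c y.
    by apply: contra xy => /eqP cxy; apply/eqP; apply: inj; rewrite // Fxy !inE eqxx ?orbT.
  have [cx0 | cx0] := eqVneq (c x) 0.
    by exists (x, y); rewrite // !inE /= xV yV -cx0 eqxx eq_sym (negbTE cxy).
  have cy0 : c y == 0 by move: cx cy cxy cx0; case: (c x) (c y) => [|[|]] [|[|]].
  by exists (y, x); rewrite /= 1?setUC // !inE /= xV yV cy0 -(eqP cy0) cxy.
have amgm := (nat_Cauchy #|A| #|B|).1.
rewrite fvec1_vertices cardV sqrnD; lia.
Qed.

End EdgeCount.

Local Open Scope ring_scope.

Lemma fvector3_bounds (g : nat -> int) : is_fvector g 3 ->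
  [/\ 0 <= g 1%N, 0 <= g 2%N & g 2%N <= g 1%N ^+ 2].
Proof.
move=> [n [D [complexD f]]]; have /= <- := f 1%N; have /= <- := f 2%N.
have := fvec2_le_sqr complexD; rewrite -mulnn expr2 => f2_le; split; lia.
Qed.

Lemma balanced_fvector3_bounds (g : nat -> int) : is_balanced_fvector g 3 ->
  [/\ 0 <= g 1%N, 0 <= g 2%N & 4 * g 2%N <= g 1%N ^+ 2].
Proof.
move=> [n [D [complexD [[k balD] f]]]]; have /= <- := f 1%N; have /= <- := f 2%N.
have k_le2 : (k <= 2)%N.
  rewrite leqNgt; apply: contra (balanced_fvec_neq0 complexD balD) => k_gt2.
  by rewrite -eqz_nat f ltnNge k_gt2.
have := balanced_fvec2_le complexD balD k_le2.
by rewrite -mulnn expr2 => f2_le; split; lia.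
Qed.

Definition gamma_poly (d : nat) (g : nat -> int) : {poly int} :=
  \sum_(i < 3) (g i)%:P * 'X^i * (1 + 'X) ^+ (d - 2 * i).

Lemma coef_1addX_exp (R : nzSemiRingType) n i :
  ((1 + 'X : {poly R}) ^+ n)`_i = 'C(n, i)%:R.
Proof.
rewrite addrC exprD1n coef_sum.
under eq_bigr => j _ do rewrite coefMn coefXn.
have [i_le_n | n_lt_i] := ltnP i n.+1.
  rewrite (bigD1 (Ordinal i_le_n)) //= eqxx big1 ?addr0 // => j /negbTE ji.
  by rewrite -val_eqE eq_sym in ji; rewrite /= ji mul0rn.
rewrite bin_small // big1 // => j _.
by rewrite gtn_eqF ?mul0rn ?(leq_trans (ltn_ord j)).
Qed.

Lemma coef_gamma_poly d g i : (gamma_poly d g)`_i =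
  \sum_(j < 3) (if (i < j)%N then 0 else g j * 'C(d - 2 * j, i - j)%:R).
Proof.
rewrite coef_sum; apply: eq_bigr => j _.
by rewrite -mulrA coefCM coefXnM coef_1addX_exp; case: ifP; rewrite ?mulr0.
Qed.

Lemma coef_hpoly d (h : nat -> int) i : (i <= d)%N -> (hpoly d h)`_i = h i.
Proof. by rewrite /hpoly coef_poly ltnS => ->. Qed.

Lemma horner_gamma_poly (R : comNzRingType) n g (z : R) :
  (map_poly intr (gamma_poly (n + 4)%N g)).[z] = (1 + z) ^+ n *
    ((g 0%N)%:~R * (1 + z) ^+ 4 + (g 1%N)%:~R * z * (1 + z) ^+ 2 + (g 2%N)%:~R * z ^+ 2).
Proof.
have -> : (map_poly intr (gamma_poly (n + 4)%N g)).[z] =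
    \sum_(i < 3) (g i)%:~R * z ^+ i * (1 + z) ^+ (n + 4 - 2 * i)%N.
  rewrite rmorph_sum horner_sum; apply: eq_bigr => i _.
  by rewrite !rmorphM !rmorphXn rmorphD rmorph1 /= map_polyC map_polyX !hornerE.
rewrite !big_ord_recr big_ord0 /= -!addnBA // !exprD; ring.
Qed.

Lemma quadratic_root_real (C : numClosedFieldType) (b c w : C) :
  b \is Num.real -> c \is Num.real -> 4 * c <= b ^+ 2 ->
  w ^+ 2 + b * w + c = 0 -> w \is Num.real.
Proof.
move=> b_real c_real discr_ge0 root_w.
pose r := sqrtC (b ^+ 2 - 4 * c).
have r_real : r \is Num.real by apply: ger0_real; rewrite sqrtC_ge0 subr_ge0.
have : (2 * w + b) ^+ 2 = r ^+ 2.
  by rewrite sqrtCK -[LHS]subr0 -(mulr0 4) -root_w; ring.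
move/eqP; rewrite eqf_sqr => r_eq.
have -> : w = ((2 * w + b) - b) / 2 by field.
by case/orP: r_eq => /eqP ->; rewrite rpredM ?rpredV ?rpredB ?rpredN ?rpred_nat.
Qed.

Lemma gamma_quartic_root_real (C : numClosedFieldType) (a b z : C) :
  0 <= a -> 0 <= b -> 4 * b <= a ^+ 2 ->
  (1 + z) ^+ 4 + a * z * (1 + z) ^+ 2 + b * z ^+ 2 = 0 -> z \is Num.real.
Proof.
move=> a_ge0 b_ge0 discr_ge0 root_z.
have z_neq0 : z != 0.
  by apply: contra_eq_neq root_z => ->; rewrite (_ : _ + _ = 1) ?oner_neq0 //; ring.
pose s := (1 + z) ^+ 2 / z.
have sz : s * z = (1 + z) ^+ 2 by rewrite divfK.
have root_s : s ^+ 2 + a * s + b = 0.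
  apply: (mulIf (expf_neq0 2 z_neq0)).
  by rewrite mul0r -root_z -[4%N]/(2 * 2)%N exprM -sz; ring.
have s_real : s \is Num.real.
  by apply: quadratic_root_real root_s; rewrite ?ger0_real.
have s_le0 : s <= 0.
  rewrite real_leNgt //; apply/negP => s_gt0.
  suff : 0 < s ^+ 2 + a * s + b by rewrite root_s ltxx.
  by rewrite -addrA ltr_pwDl ?exprn_gt0 // addr_ge0 // mulr_ge0 // ltW.
apply: (@quadratic_root_real _ (2 - s) 1); rewrite ?rpredB ?rpred1 ?rpred_nat //.
  have -> : (2 - s) ^+ 2 = 4 + (s ^+ 2 - 4 * s) by ring.
  rewrite mulr1 lerDl addr_ge0 ?real_exprn_even_ge0 //.
  by rewrite oppr_ge0 mulr_ge0_le0.
by rewrite -(subrr ((1 + z) ^+ 2)) -{2}sz; ring.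
Qed.

Lemma gamma_poly_real_rooted n (g : nat -> int) :
  g 0%N = 1 -> 0 <= g 1%N -> 0 <= g 2%N -> 4 * g 2%N <= g 1%N ^+ 2 ->
  real_rooted (gamma_poly (n + 4)%N g).
Proof.
move=> g0 a_ge0 b_ge0 discr_ge0 z.
rewrite /root horner_gamma_poly g0 mul1r mulf_eq0 expf_eq0 => /orP [/andP [_] | /eqP].
  by rewrite addrC addr_eq0 => /eqP ->; rewrite rpredN rpred1.
apply: gamma_quartic_root_real; rewrite ?ler0z //.
by rewrite -(rmorphXn intr) -[4]/(4%:~R) -intrM ler_int.
Qed.

Ltac eval_binomials := repeat match goal with |- context [binomial ?n ?k] =>
  let v := eval vm_compute in (binomial n k) in change (binomial n k) with v end.

Lemma gamma_poly_log_concave d (h g : nat -> int) : ((d == 4) || (d == 5))%N ->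
  g 0%N = 1 -> 0 <= g 1%N -> 0 <= g 2%N -> g 2%N <= g 1%N ^+ 2 ->
  hpoly d h = gamma_poly d g -> log_concave d h.
Proof.
move=> d45 g0 a_ge0 b_ge0 b_le E i /andP [i_gt0 i_lt_d].
have coef_h j : (j <= d)%N -> h j = (gamma_poly d g)`_j.
  by move=> jd; rewrite -E coef_hpoly.
case/orP: d45 => /eqP d_eq; subst d; case: i i_gt0 i_lt_d => [|[|[|[|[|]]]]] //= _ _;
  rewrite !coef_h // !coef_gamma_poly !big_ord_recr !big_ord0 /=; eval_binomials;
  rewrite g0 expr2; nia.
Qed.

Theorem corollary8p3 (d : nat) (h : nat -> int) (g : nat -> int) :
  ((d == 4) || (d == 5))%N ->
  h 0%N = 1 ->
  (forall i, (i <= d)%N -> h i = h (d - i)%N) ->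
  hpoly d h = \sum_(i < 3) (g i)%:P * 'X^i * (1 + 'X) ^+ (d - 2 * i) ->
  (is_fvector g 3 -> log_concave d h) /\
  (is_balanced_fvector g 3 -> real_rooted (hpoly d h)).
Proof.
(* The symmetry of h is a consequence of the gamma expansion. *)
move=> d45 h0 _ E.
have g0 : g 0%N = 1.
  rewrite -h0 -(coef_hpoly h (leq0n d)) E coef_gamma_poly.
  by rewrite !big_ord_recr big_ord0 /= bin0 add0r mulr1 !addr0.
split=> [/fvector3_bounds [a_ge0 b_ge0 b_le]
        | /balanced_fvector3_bounds [a_ge0 b_ge0 discr_ge0]].
  exact: gamma_poly_log_concave d45 g0 a_ge0 b_ge0 b_le E.
rewrite E; case/orP: d45 => /eqP ->.
  exact: (@gamma_poly_real_rooted 0%N g g0 a_ge0 b_ge0 discr_ge0).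
exact: (@gamma_poly_real_rooted 1%N g g0 a_ge0 b_ge0 discr_ge0).
Qed.
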